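(* Let $(X,d)$ be a $K$-doubling metric space ($K\ge2$). Let $\mathcal F_1\subset\mathrm{Lip}(X,\mathbb{R})$ and $\mathcal F\subset\mathrm{Lip}(X,\mathbb{R}^D)$ be function spaces such that: (1) $(\mathcal F_1,\|\cdot\|_{\mathcal F_1})$ and $(\mathcal F,\|\cdot\|_{\mathcal F})$ are normed linear spaces; (2) $\|f\|_{\mathrm{Lip}}\lesssim\|f\|_{\mathcal F_1}$ for all $f\in\mathcal F_1$ and $\|v\|_{\mathrm{Lip}}\lesssim\|v\|_{\mathcal F}$ for all $v\in\mathcal F$; (3) for $f\in\mathcal F_1$ and $v,w\in\mathcal F$: $fv\in\mathcal F$ with $\|fv\|_{\mathcal F}\lesssim\|f\|_{\mathcal F_1}\|v\|_{\mathcal F}$, and $v\cdot w\in\mathcal F_1$ with $\|v\cdot w\|_{\mathcal F_1}\lesssim\|v\|_{\mathcal F}\|w\|_{\mathcal F}$; if $f\in\mathcal F_1$ and $f\ge c>0$ on $X$ then $1/f\in\mathcal F_1$ with $\|1/f\|_{\mathcal F_1}\lesssim_c\|f\|_{\mathcal F_1}$; if $v\in\mathcal F$ and $|v|\ge c>0$ on $X$ then $|v|\in\mathcal F_1$ with $\||v|\|_{\mathcal F_1}\lesssim_c\|v\|_{\mathcal F}$; (4) for every $\delta>0$ and $w\in\mathrm{Lip}(X,\mathbb{R}^D)$ with $\|w\|_{\mathrm{Lip}}\le1$ there exists $v\in\mathcal F$ with $\|v-w\|_{L^\infty}<\delta$ and $\|v\|_{\mathcal F}\lesssim_\delta\|w\|_{L^\infty}+\|w\|_{\mathrm{Lip}}$.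 Let $1\le m\le D-224K^4\log K$. If $v_1,\dots,v_m:X\to\mathbb{S}^{D-1}$ satisfy $\|v_i\|_{\mathcal F}\le1$ and $v_1(p),\dots,v_m(p)$ are orthonormal for every $p\in X$, then there exists $v_{m+1}:X\to\mathbb{S}^{D-1}$ with $\|v_{m+1}\|_{\mathcal F}\lesssim_{K,m,\mathcal F}1$ such that $v_1(p),\dots,v_{m+1}(p)$ are orthonormal for every $p\in X$.
   Context: $(X,d)$ is $K$-doubling if every ball of radius $R$ is covered by $K$ balls of radius $R/2$. $\mathrm{Lip}(X,\mathbb{R}^D)$ is the space of Lipschitz maps $X\to\mathbb{R}^D$, with $\|f\|_{\mathrm{Lip}}=\sup_{x\ne y}|f(x)-f(y)|/d(x,y)$ and $\|f\|_{L^\infty}=\sup_X|f|$. Implied constants in the hypotheses are fixed constants; the conclusion's constant depends on $K$, $m$, and those constants of $\mathcal F,\mathcal F_1$. *)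

From mathcomp Require Import all_boot all_order all_algebra.
From mathcomp Require Import all_classical all_reals all_analysis.
Set Implicit Arguments. Unset Strict Implicit. Unset Printing Implicit Defensive.
Import Order.TTheory GRing.Theory Num.Theory.
Local Open Scope classical_set_scope.
Local Open Scope ring_scope.

Section Defs.
Variable R : realType.

Definition edot (D : nat) (u w : 'I_D -> R) : R := \sum_(i < D) u i * w i.
Definition enorm (D : nat) (u : 'I_D -> R) : R := Num.sqrt (\sum_(i < D) u i ^+ 2).

Variable X : Type.

Definition is_metric (d : X -> X -> R) : Prop :=
  [/\ forall x y, d x y = 0 <-> x = y,
      forall x y, d x y = d y x &
      forall x y z, d x z <= d x y + d y z].

Definition doubling (d : X -> X -> R) (K : nat) : Prop :=
  forall (x : X) (r : R), 0 < r ->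
    exists c : 'I_K -> X, forall y, d x y <= r -> exists i, d (c i) y <= r / 2.

(* Lipschitz norms sup_{x<>y} |f x - f y| / d(x,y), valued in \bar R
   (+oo if not Lipschitz); the sup is taken together with 0, which changes
   nothing when X has two points and gives 0 otherwise. *)
Definition lip_norm1 (d : X -> X -> R) (f : X -> R) : \bar R :=
  ereal_sup ([set ((`|f xy.1 - f xy.2| / d xy.1 xy.2)%:E)
              | xy in [set xy : X * X | xy.1 <> xy.2]] `|` [set 0%E]).

Definition lip_norm (D : nat) (d : X -> X -> R) (v : X -> 'I_D -> R) : \bar R :=
  ereal_sup ([set ((enorm (fun i => v xy.1 i - v xy.2 i) / d xy.1 xy.2)%:E)
              | xy in [set xy : X * X | xy.1 <> xy.2]] `|` [set 0%E]).

(* sup norm sup_X |v|, valued in \bar R (+oo if unbounded; 0 on empty X). *)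
Definition linf_norm (D : nat) (v : X -> 'I_D -> R) : \bar R :=
  ereal_sup ([set ((enorm (v x))%:E) | x in [set: X]] `|` [set 0%E]).

Definition normed_subspace1 (S : set (X -> R)) (n : (X -> R) -> R) : Prop :=
  [/\ S (fun _ => 0),
      forall f g, S f -> S g -> S (fun x => f x + g x),
      forall (a : R) f, S f -> S (fun x => a * f x),
      forall f, S f -> 0 <= n f /\ (n f = 0 -> f = (fun _ => 0)) &
      (forall (a : R) f, S f -> n (fun x => a * f x) = `|a| * n f) /\
      (forall f g, S f -> S g -> n (fun x => f x + g x) <= n f + n g)].

Definition normed_subspace (D : nat) (S : set (X -> 'I_D -> R))
    (n : (X -> 'I_D -> R) -> R) : Prop :=
  [/\ S (fun _ _ => 0),
      forall v w, S v -> S w -> S (fun x i => v x i + w x i),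
      forall (a : R) v, S v -> S (fun x i => a * v x i),
      forall v, S v -> 0 <= n v /\ (n v = 0 -> v = (fun _ _ => 0)) &
      (forall (a : R) v, S v -> n (fun x i => a * v x i) = `|a| * n v) /\
      (forall v w, S v -> S w -> n (fun x i => v x i + w x i) <= n v + n w)].
End Defs.

From mathcomp Require Import all_boot all_order all_algebra finmap.
From mathcomp Require Import all_classical all_reals all_analysis.
From mathcomp Require Import ring lra.
Import Order.TTheory GRing.Theory Num.Theory.
Local Open Scope classical_set_scope.
Local Open Scope ring_scope.

Set Implicit Arguments. Unset Strict Implicit. Unset Printing Implicit Defensive.

(* In a K-doubling space an r-separated set meets every ball of
     radius 4r in at most N = K^4 points.  By Zorn's lemma there is a maximal
     r-separated set S with unit vectors u(y), y in S, orthogonal to the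
     frame v_1(y),...,v_m(y) and to u(y') for y' in S within 4r: a far point
     can always be added because only m + N < D vectors must be avoided.
   - The bump field w = a * sum_y psi_y u(y) (psi_y a tent of radius 2r,
     a = r/(4N)) is 1-Lipschitz, satisfies a <= |w| <= r/2, and for r small
     in terms of m and the Lipschitz constant of the frame it is almost
     orthogonal to every v_i.
   - Analysis.  Hypothesis (4) gives v in F uniformly close to w, hence still
     long and almost orthogonal to the frame; the projection P v of v onto
     the orthogonal complement of the frame stays in F and has length
     >= a/2, so P v / |P v| is the required field, with a norm bound by (3). *)

Section Euclid.
Variables (R : realType) (D : nat).
Implicit Types (u v w : 'I_D -> R).

Lemma edotC u w : edot u w = edot w u.
Proof. by apply: eq_bigr => i _; rewrite mulrC. Qed.

Lemma edotDl u v w : edot (fun i => u i + v i) w = edot u w + edot v w.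
Proof. by rewrite /edot -big_split; apply: eq_bigr => i _; rewrite mulrDl. Qed.

Lemma edotBl u v w : edot (fun i => u i - v i) w = edot u w - edot v w.
Proof. by rewrite /edot -sumrB; apply: eq_bigr => i _; rewrite mulrBl. Qed.

Lemma edotZl a u w : edot (fun i => a * u i) w = a * edot u w.
Proof. by rewrite /edot mulr_sumr; apply: eq_bigr => i _; rewrite mulrA. Qed.

Lemma edotDr u v w : edot w (fun i => u i + v i) = edot w u + edot w v.
Proof. by rewrite edotC edotDl !(edotC w). Qed.

Lemma edotBr u v w : edot w (fun i => u i - v i) = edot w u - edot w v.
Proof. by rewrite edotC edotBl !(edotC w). Qed.

Lemma edotZr a u w : edot w (fun i => a * u i) = a * edot w u.
Proof. by rewrite edotC edotZl edotC. Qed.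

Lemma edot_suml (I : Type) (s : seq I) (F : I -> 'I_D -> R) w :
  edot (fun i => \sum_(y <- s) F y i) w = \sum_(y <- s) edot (F y) w.
Proof. by rewrite /edot exchange_big; apply: eq_bigr => i _; rewrite mulr_suml. Qed.

Lemma edot_sumr (I : Type) (s : seq I) (F : I -> 'I_D -> R) w :
  edot w (fun i => \sum_(y <- s) F y i) = \sum_(y <- s) edot w (F y).
Proof. by rewrite edotC edot_suml; apply: eq_bigr => y _; rewrite edotC. Qed.

Lemma edot_ge0 u : 0 <= edot u u.
Proof. by apply: sumr_ge0 => i _; rewrite -expr2 sqr_ge0. Qed.

Lemma edot_eq0 u : edot u u = 0 -> u = (fun _ => 0).
Proof.
move=> h; apply: funext => i.
have ge : forall j, xpredT j -> 0 <= u j * u j by move=> j _; rewrite -expr2 sqr_ge0.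
have := @psumr_eq0P _ _ xpredT (fun i => u i * u i) ge h i isT.
by move/eqP; rewrite mulf_eq0 orbb => /eqP.
Qed.

Lemma enormE u : enorm u = Num.sqrt (edot u u).
Proof. by rewrite /enorm /edot; congr Num.sqrt; apply: eq_bigr => i _; rewrite expr2. Qed.

Lemma enorm_ge0 u : 0 <= enorm u.
Proof. by rewrite enormE sqrtr_ge0. Qed.

Lemma enorm_sqr u : enorm u ^+ 2 = edot u u.
Proof. by rewrite enormE sqr_sqrtr // edot_ge0. Qed.

Lemma enorm0 : enorm (fun _ : 'I_D => 0 : R) = 0.
Proof.
by rewrite enormE /edot big1 ?sqrtr0 // => i _; rewrite mul0r.
Qed.

Lemma enormZ a u : enorm (fun i => a * u i) = `|a| * enorm u.
Proof.
by rewrite !enormE edotZl edotZr mulrA -expr2 sqrtrM ?sqr_ge0 // sqrtr_sqr.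
Qed.

(* Cauchy-Schwarz, first in squared form (minimise the quadratic
   t |-> |t u + w|^2 at t = -<u,w>/<u,u>). *)
Lemma edot_sqr_le u w : edot u w ^+ 2 <= edot u u * edot w w.
Proof.
have [h0|hpos] := eqVneq (edot u u) 0.
  have e0 v : edot (fun _ => 0) v = 0 by rewrite /edot big1 // => i _; rewrite mul0r.
  by rewrite (edot_eq0 h0) !e0 expr0n mul0r.
have Apos : 0 < edot u u by rewrite lt_def hpos edot_ge0.
set A := edot u u; set B := edot u w; set C := edot w w.
pose t := - B / A.
have := edot_ge0 (fun i => t * u i + w i).
rewrite edotDl !edotZl edotDr edotZr edotDr edotZr -/A -/B -/C (edotC w u) -/B.
have -> : t * (t * A + B) + (t * B + C) = C - B ^+ 2 / A.
  by rewrite /t; field; rewrite lt0r_neq0.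
by rewrite subr_ge0 ler_pdivrMr // mulrC.
Qed.

Lemma cauchy_schwarz u w : `|edot u w| <= enorm u * enorm w.
Proof.
rewrite !enormE -sqrtrM ?edot_ge0 // -sqrtr_sqr ler_sqrt ?mulr_ge0 ?edot_ge0 //.
exact: edot_sqr_le.
Qed.

Lemma enormD u w : enorm (fun i => u i + w i) <= enorm u + enorm w.
Proof.
rewrite enormE -(@ger0_norm _ (enorm u + enorm w)); last by rewrite addr_ge0 ?enorm_ge0.
rewrite -sqrtr_sqr ler_sqrt ?sqr_ge0 // edotDl !edotDr (edotC w u) sqrrD !enorm_sqr.
have := cauchy_schwarz u w; have := ler_norm (edot u w); lra.
Qed.

Lemma enormN u : enorm (fun i => - u i) = enorm u.
Proof.
rewrite -[RHS]mul1r -normrN1 -enormZ.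
by congr enorm; apply: funext => i; rewrite mulN1r.
Qed.

Lemma enormB u w : enorm (fun i => u i - w i) <= enorm u + enorm w.
Proof. by rewrite -(enormN w); exact: enormD. Qed.

Lemma enormBC u w : enorm (fun i => u i - w i) = enorm (fun i => w i - u i).
Proof. by rewrite -enormN; congr enorm; apply: funext => i; rewrite opprB. Qed.

Lemma enorm_lerB u w : enorm u - enorm w <= enorm (fun i => u i - w i).
Proof.
have := enormD (fun i => u i - w i) w.
have -> : (fun i => u i - w i + w i) = u by apply: funext => i; rewrite subrK.
lra.
Qed.

Lemma enorm_sum (I : Type) (s : seq I) (F : I -> 'I_D -> R) :
  enorm (fun i => \sum_(y <- s) F y i) <= \sum_(y <- s) enorm (F y).
Proof.
elim: s => [|y s IH].
  have -> : (fun i => \sum_(y <- [::]) F y i) = (fun _ => 0).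
    by apply: funext => i; rewrite big_nil.
  by rewrite enorm0 big_nil.
rewrite big_cons.
have -> : (fun i => \sum_(j <- y :: s) F j i) = (fun i => F y i + \sum_(j <- s) F j i).
  by apply: funext => i; rewrite big_cons.
by apply: le_trans (enormD _ _) _; rewrite lerD2l.
Qed.

End Euclid.

(* Fewer than D vectors of R^D always admit a common orthogonal unit vector:
   take a nonzero row of the kernel of the matrix they form. *)
Lemma unit_orthogonal_to_seq (R : realType) (D : nat) (s : seq ('I_D -> R)) :
  (size s < D)%N ->
  exists u : 'I_D -> R, edot u u = 1 /\
    forall k, (k < size s)%N -> edot (nth (fun _ => 0) s k) u = 0.
Proof.
move=> hs.
pose A : 'M[R]_(size s, D) := \matrix_(i, j) nth (fun _ => 0) s i j.
pose B := kermx A^T.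
have rB : (0 < \rank B)%N.
  rewrite /B mxrank_ker mxrank_tr subn_gt0.
  exact: leq_ltn_trans (rank_leq_row A) hs.
have [l hl] : exists l, row l B != 0.
  apply: contrapT => h; move: rB; suff -> : B = 0 by rewrite mxrank0.
  apply/row_matrixP => i; rewrite row0.
  by case: (eqVneq (row i B) 0) => // hi; exfalso; apply: h; exists i.
pose x := fun j : 'I_D => row l B 0 j.
have xA : forall i : 'I_(size s), edot (nth (fun _ => 0) s i) x = 0.
  move=> i; have : (row l B *m A^T) 0 i = 0.
    by rewrite -row_mul /B mulmx_ker row0 mxE.
  rewrite mxE => h; rewrite -[RHS]h; apply: eq_bigr => j _.
  by rewrite [A^T j i]mxE [A i j]mxE mulrC.
have xpos : 0 < edot x x.
  rewrite lt_def edot_ge0 andbT; apply/negP => /eqP /edot_eq0 h.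
  move/negP: hl; apply; apply/eqP/matrixP => i j.
  by rewrite (ord1 i) [RHS]mxE -/(x j) h.
pose c := (Num.sqrt (edot x x))^-1.
exists (fun j => c * x j); split.
  rewrite edotZl edotZr mulrA /c -expr2 exprVn sqr_sqrtr ?edot_ge0 //.
  by rewrite mulVf // gt_eqF.
by move=> k hk; rewrite edotZr (xA (Ordinal hk)) mulr0.
Qed.

Section Doubling.
Variables (R : realType) (X : choiceType) (d : X -> X -> R) (K : nat).
Hypothesis hd : is_metric d.
Hypothesis hdb : doubling d K.

Lemma d0 x : d x x = 0. Proof. by case: hd => h _ _; apply/h. Qed.
Lemma dC x y : d x y = d y x. Proof. by case: hd. Qed.
Lemma dtri x y z : d x z <= d x y + d y z. Proof. by case: hd. Qed.

Lemma d_ge0 x y : 0 <= d x y.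
Proof. by have := dtri x y x; rewrite d0 (dC y x); lra. Qed.

Lemma d_gt0 x y : x <> y -> 0 < d x y.
Proof.
move=> nxy; rewrite lt_def d_ge0 andbT; apply/eqP => h.
by apply: nxy; case: hd => e _ _; apply/e.
Qed.

Lemma doubling_iter k x (rho : R) : 0 < rho ->
  exists (T : finType) (c : T -> X), #|T| = (K ^ k)%N /\
    forall y, d x y <= rho -> exists t, d (c t) y <= rho / 2 ^+ k.
Proof.
move=> rp; elim: k => [|k [T [c [cT hc]]]].
  exists unit, (fun _ => x); split; first by rewrite card_unit.
  by move=> y hy; exists tt; rewrite expr0 divr1.
have rk : 0 < rho / 2 ^+ k by rewrite divr_gt0 // exprn_gt0.
have [f hf] := choice (fun t => @hdb (c t) (rho / 2 ^+ k) rk).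
exists (T * 'I_K)%type, (fun p => f p.1 p.2); split.
  by rewrite card_prod cT card_ord expnSr.
move=> y /hc [t ht]; have [i hi] := hf t y ht; exists (t, i) => /=.
by rewrite exprSr invfM mulrA.
Qed.

Definition separated (S : set X) (r : R) :=
  forall x y, S x -> S y -> x <> y -> r < d x y.

(* Packing: two r-separated points cannot share a covering ball of radius
   r/4, so a separated set inside a 4r-ball injects into K^4 covering balls. *)
Lemma separated_ball_card (S : set X) (r : R) (p : X) (A : set X) :
  0 < r -> separated S r -> A `<=` S `&` [set y | d p y <= 4 * r] ->
  finite_set A /\ (size (fset_set A) <= K ^ 4)%N.
Proof.
move=> rp hS hA.
have [T [c [cT hc]]] := @doubling_iter 4 p (4 * r) (mulr_gt0 (ltr0Sn _ 3) rp).
have e4 : 4 * r / 2 ^+ 4 = r / 4 by field.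
have hg : forall y, exists t, d p y <= 4 * r -> d (c t) y <= r / 4.
  move=> y; case: (pselect (d p y <= 4 * r)) => h.
    by have [t ht] := hc y h; exists t; rewrite -e4.
  have hp : d p p <= 4 * r by rewrite d0 mulr_ge0 // ltW.
  by have [t _] := hc p hp; exists t.
have [g hg'] := choice hg.
have ginj : forall y y', A y -> A y' -> g y = g y' -> y = y'.
  move=> y y' Ay Ay' e; apply: contrapT => ne.
  have [Sy py] := hA y Ay; have [Sy' py'] := hA y' Ay'.
  have := hS y y' Sy Sy' ne.
  have h1 := hg' y py; have h2 := hg' y' py'; rewrite e dC in h1.
  by have := dtri y (c (g y')) y'; lra.
have fA : finite_set A.
  pose h t := if pselect (exists y, A y /\ g y = t) is left e
              then projT1 (cid e) else p.
  apply: (sub_finite_set (B := h @` setT)); last exact: finite_image finite_finset.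
  move=> y Ay; exists (g y) => //; rewrite /h.
  case: pselect => [e|]; last by move=> nn; exfalso; apply: nn; exists y.
  by case: cid => y' [Ay' ey'] /=; apply: ginj.
split => //; rewrite -(size_map g).
have -> : (K ^ 4)%N = size (enum T) by rewrite -cardE cT.
apply: uniq_leq_size; last by move=> t _; rewrite mem_enum.
rewrite map_inj_in_uniq ?fset_uniq // => y y' hy hy'.
by apply: ginj; move: hy hy'; rewrite !in_fset_set // !inE.
Qed.

End Doubling.

(* An r-net of X carrying an adapted frame: unit vectors u(x), x in the net,
   orthogonal to v_1(x),...,v_m(x) and to u(y) for every net point y within
   4r of x.  It is built by Zorn's lemma; a maximal pair is a net because a
   far point p can always be added, since at most m + K^4 < D vectors must
   be avoided at p. *)
Section AdaptedNet.
Variables (R : realType) (X : choiceType) (d : X -> X -> R) (K : nat).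
Hypothesis hd : is_metric d.
Hypothesis hdb : doubling d K.
Variables (m D : nat) (vs : 'I_m -> X -> 'I_D -> R) (r : R).
Hypothesis rp : 0 < r.
Hypothesis hmD : (m + K ^ 4 < D)%N.

Definition adapted_frame (S : set X) (u : X -> 'I_D -> R) :=
  [/\ separated d S r,
      forall x, S x -> edot (u x) (u x) = 1,
      forall x i, S x -> edot (vs i x) (u x) = 0 &
      forall x y, S x -> S y -> x <> y -> d x y <= 4 * r -> edot (u x) (u y) = 0].

Lemma adapted_frame_extend (S : set X) (u : X -> 'I_D -> R) (p : X) :
  adapted_frame S u -> (forall x, S x -> r < d x p) ->
  exists u', adapted_frame (S `|` [set p]) u' /\ forall x, S x -> u' x = u x.
Proof.
move=> [hs hu hv ho] far.
have pS : ~ S p by move=> /far; rewrite d0 // => /(lt_trans rp); rewrite ltxx.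
have [fA sA] := separated_ball_card hd hdb (p := p)
  (A := S `&` [set y | d p y <= 4 * r]) rp hs (fun x h => h).
set s := fset_set _ in sA.
pose L := [seq vs i p | i <- fintype.enum 'I_m] ++ [seq u y | y <- (s : seq X)].
have sizeL : size L = (m + size s)%N.
  by rewrite size_cat (size_map _ (fintype.enum 'I_m)) size_enum_ord size_map.
have [u0 [u01 u0o]] : exists u0 : 'I_D -> R, edot u0 u0 = 1 /\
    forall k, (k < size L)%N -> edot (nth (fun _ => 0) L k) u0 = 0.
  by apply: unit_orthogonal_to_seq; rewrite sizeL; apply: leq_ltn_trans hmD; rewrite leq_add2l.
have u0v : forall i, edot (vs i p) u0 = 0.
  move=> i; have := u0o i; rewrite sizeL ltn_addr // nth_cat size_map size_enum_ord ltn_ord.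
  by rewrite (nth_map i) ?size_enum_ord // nth_ord_enum => ->.
have u0n : forall y, S y -> d p y <= 4 * r -> edot (u y) u0 = 0.
  move=> y Sy py; have ys : y \in (s : seq X) by rewrite in_fset_set // inE.
  have := u0o (m + index y s)%N; rewrite sizeL ltn_add2l index_mem ys.
  rewrite nth_cat size_map size_enum_ord ltnNge leq_addr /= addKn.
  by rewrite (nth_map y) ?index_mem // nth_index // => ->.
exists (fun x => if x == p then u0 else u x); split; last first.
  by move=> x Sx; case: eqP => // e; subst x.
have neqp x : S x -> (x == p) = false by move=> Sx; apply/eqP => e; subst x.
split.
- move=> x y [Sx|->] [Sy|->] nxy //; [exact: hs | exact: far | rewrite dC //; exact: far].
- by move=> x [Sx|->]; rewrite ?eqxx // neqp //; apply: hu.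
- by move=> x i [Sx|->]; rewrite ?eqxx // neqp //; apply: hv.
- move=> x y [Sx|->] [Sy|->] nxy hxy //; rewrite ?eqxx ?neqp //.
  + exact: ho.
  + by apply: u0n => //; rewrite dC.
  + by rewrite edotC; apply: u0n.
Qed.

Definition frame_le (a b : set X * (X -> 'I_D -> R)) :=
  a.1 `<=` b.1 /\ forall x, a.1 x -> a.2 x = b.2 x.

(* A chain of adapted frames has an adapted upper bound: its union. *)
Lemma adapted_chain_bound (A : set (set X * (X -> 'I_D -> R))) :
  (forall a, A a -> adapted_frame a.1 a.2) ->
  (forall a b, A a -> A b -> frame_le a b \/ frame_le b a) ->
  exists c, adapted_frame c.1 c.2 /\ forall a, A a -> frame_le a c.
Proof.
move=> hA tot.
pose Ss x := exists a, A a /\ a.1 x.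
pose us x := if pselect (Ss x) is left e then (projT1 (cid e)).2 x else (fun _ => 0).
have agree : forall a x, A a -> a.1 x -> us x = a.2 x.
  move=> a x Aa ax; rewrite /us; case: pselect => [e|]; last first.
    by move=> nn; exfalso; apply: nn; exists a.
  case: cid => b [Ab bx] /=.
  by case: (tot a b Aa Ab) => [[_ h]|[_ h]]; [rewrite h | rewrite -h].
have common : forall a b, A a -> A b -> exists c, [/\ A c, a.1 `<=` c.1 & b.1 `<=` c.1].
  move=> a b Aa Ab; case: (tot a b Aa Ab) => [[h _]|[h _]].
    by exists b; split.
  by exists a; split.
exists (Ss, us); split; last first.
  by move=> a Aa; split => [x ax|x ax]; [exists a | rewrite /= (agree a)].
split => /=.
- move=> x y [a [Aa ax]] [b [Ab bx]] nxy.
  have [c [Ac hac hbc]] := common a b Aa Ab.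
  by case: (hA c Ac) => hc _ _ _; apply: hc => //; [apply: hac | apply: hbc].
- by move=> x [a [Aa ax]]; rewrite (agree a) //; case: (hA a Aa) => _ h _ _; apply: h.
- by move=> x i [a [Aa ax]]; rewrite (agree a) //; case: (hA a Aa) => _ _ h _; apply: h.
- move=> x y [a [Aa ax]] [b [Ab bx]] nxy hxy.
  have [c [Ac hac hbc]] := common a b Aa Ab.
  rewrite (agree c) ?(agree c y) //; try by [apply: hac | apply: hbc].
  by case: (hA c Ac) => _ _ _ h; apply: h => //; [apply: hac | apply: hbc].
Qed.

Lemma adapted_net_exists :
  exists S u, adapted_frame S u /\ forall p, exists x, S x /\ d x p <= r.
Proof.
pose T := {su : set X * (X -> 'I_D -> R) | adapted_frame su.1 su.2}.
have v0 : adapted_frame set0 (fun _ _ => 0) by split.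
pose Rl (a b : T) := `[< frame_le (sval a) (sval b) >].
have Rrefl : forall a, Rl a a by move=> a; apply/asboolP; split.
have Rtrans : forall a b c, Rl a b -> Rl b c -> Rl a c.
  move=> a b c /asboolP [h1 h2] /asboolP [h3 h4]; apply/asboolP; split.
    by move=> x /h1 /h3.
  by move=> x ax; rewrite h2 // h4 //; apply: h1.
have chain : forall A, total_on A Rl -> exists t, forall s, A s -> Rl s t.
  move=> A tot.
  have hA : forall a, (sval @` A) a -> adapted_frame a.1 a.2.
    by move=> _ [a _ <-]; exact: svalP a.
  have htot : forall a b, (sval @` A) a -> (sval @` A) b ->
      frame_le a b \/ frame_le b a.
    by move=> _ _ [a Aa <-] [b Ab <-]; case: (tot a b Aa Ab) => /asboolP h; [left|right].
  have [c [vc hc]] := adapted_chain_bound hA htot.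
  by exists (exist _ c vc) => a Aa; apply/asboolP; apply: hc; exists a.
have [[[S u] vSu] hmax] :=
  ZL_preorder (exist _ (set0, fun _ _ => 0) v0 : T) Rrefl Rtrans chain.
exists S, u; split => // p; apply: contrapT => np.
have far : forall x, S x -> r < d x p.
  by move=> x Sx; rewrite ltNge; apply/negP => h; apply: np; exists x.
have [u' [vu' eu']] := adapted_frame_extend vSu far.
have /asboolP [/= hsub _] : Rl (exist _ (S `|` [set p], u') vu') (exist _ (S, u) vSu).
  apply: hmax; apply/asboolP; split => /=; first by move=> x Sx; left.
  by move=> x Sx; rewrite eu'.
have /far : S p by apply: hsub; right.
by rewrite d0 // => /(lt_trans rp); rewrite ltxx.
Qed.

End AdaptedNet.

Lemma sum_le_size (R : realType) (I : eqType) (s : seq I) (F : I -> R) (c : R) :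
  (forall y, y \in s -> F y <= c) -> \sum_(y <- s) F y <= (size s)%:R * c.
Proof.
elim: s => [|y s IH] h; first by rewrite big_nil mul0r.
rewrite big_cons /= -addn1 natrD mulrDl mul1r addrC.
apply: lerD; first by apply: IH => z hz; apply: h; rewrite inE hz orbT.
by apply: h; rewrite inE eqxx.
Qed.

Lemma max0r_lip (R : realType) (a b : R) :
  `|Num.max 0 a - Num.max 0 b| <= `|a - b|.
Proof.
have h1 := ler_norm (a - b); have h2 := ler_norm (b - a); rewrite distrC in h2.
rewrite ler_norml; apply/andP; split; case: (leP 0 a) => ha; case: (leP 0 b) => hb; lra.
Qed.

(* The bump field w0(p) = sum_{y in S, d(p,y) <= 4r} psi_y(p) u(y), where
   psi_y = max(0, 2 - d(y,.)/r) is a tent of height 2 supported in B(y,2r).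
   By the packing bound every sum has at most N = K^4 terms; terms with
   nonzero weight at p come from net points 4r-close to each other, hence
   carry orthonormal u's, which gives |w0| >= 1.  Moreover w0 is
   4N/r-Lipschitz, bounded by 2N, and almost orthogonal to the v_i, since
   v_i(p) is L d(p,y)-close to v_i(y), which is orthogonal to u(y). *)
Section BumpField.
Variables (R : realType) (X : choiceType) (d : X -> X -> R) (K : nat).
Hypothesis hd : is_metric d.
Hypothesis hdb : doubling d K.
Variables (m D : nat) (vs : 'I_m -> X -> 'I_D -> R) (r L : R).
Hypothesis rp : 0 < r.
Variables (S : set X) (u : X -> 'I_D -> R).
Hypothesis vSu : adapted_frame d vs r S u.

Definition bump (y p : X) := Num.max 0 (2 - d y p / r).
Definition net_near (p : X) := S `&` [set y | d p y <= 4 * r].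
Definition bump_field (p : X) :=
  fun k => \sum_(y <- fset_set (net_near p)) bump y p * u y k.
Let N := (K ^ 4)%N.

Lemma bump_ge0 y p : 0 <= bump y p.
Proof. by rewrite /bump le_max lexx. Qed.

Lemma bump_le2 y p : bump y p <= 2.
Proof.
have : 0 <= d y p / r by rewrite divr_ge0 // ?d_ge0 // ltW.
by rewrite /bump; case: (leP 0 (2 - d y p / r)) => h; lra.
Qed.

Lemma bump_ge1 y p : d y p <= r -> 1 <= bump y p.
Proof.
move=> h; have : d y p / r <= 1 by rewrite ler_pdivrMr // mul1r.
by rewrite /bump; case: (leP 0 (2 - d y p / r)) => h'; lra.
Qed.

Lemma bump_eq0 y p : 2 * r <= d y p -> bump y p = 0.
Proof.
move=> h; have : 2 <= d y p / r by rewrite ler_pdivlMr.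
by rewrite /bump; case: (leP 0 (2 - d y p / r)) => h'; lra.
Qed.

Lemma bump_neq0 y p : bump y p != 0 -> d y p < 2 * r.
Proof. by move=> h; rewrite ltNge; apply/negP => /bump_eq0 e; rewrite e eqxx in h. Qed.

Lemma bump_lip y p q : `|bump y p - bump y q| <= d p q / r.
Proof.
apply: le_trans (max0r_lip _ _) _.
have -> : 2 - d y p / r - (2 - d y q / r) = (d y q - d y p) / r.
  by field; rewrite gt_eqF.
rewrite normrM (@gtr0_norm _ r^-1) ?invr_gt0 // ler_pM2r ?invr_gt0 //.
have := dtri hd y q p; have := dtri hd y p q; rewrite (dC hd q p).
by rewrite ler_norml; move=> h1 h2; apply/andP; split; lra.
Qed.

Lemma net_near_card p (P : set X) : P `<=` net_near p ->
  finite_set P /\ (size (fset_set P) <= N)%N.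
Proof.
by move=> hP; case: vSu => hs _ _ _; exact: (separated_ball_card hd hdb (p := p) rp hs hP).
Qed.

Lemma net_near_mem p y : y \in (fset_set (net_near p) : seq X) -> net_near p y.
Proof. by rewrite in_fset_set ?inE //; case: (@net_near_card p _ (fun _ h => h)). Qed.

Lemma frame_unit y : S y -> enorm (u y) = 1.
Proof. by case: vSu => _ h _ _ Sy; rewrite enormE h // sqrtr1. Qed.

Lemma bump_field_restrict p (P : set X) k : P `<=` net_near p ->
  (forall y, net_near p y -> ~ P y -> bump y p = 0) ->
  bump_field p k = \sum_(y <- fset_set P) bump y p * u y k.
Proof.
move=> hP h0.
have [fB _] := @net_near_card p (net_near p) (fun _ h => h).
have [fP _] := @net_near_card p P hP.
rewrite /bump_field -!fsbig_finite //.
by apply/esym/fsbig_widen => // y [By nPy] /=; rewrite h0 // mul0r.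
Qed.

(* Net points with nonzero weight at p are 4r-close, so their frame vectors
   are orthonormal and |w0(p)|^2 is the sum of the squared weights. *)
Lemma bump_field_sqr p :
  edot (bump_field p) (bump_field p) = \sum_(y <- fset_set (net_near p)) bump y p ^+ 2.
Proof.
rewrite /bump_field edot_suml; apply: eq_big_seq => y ys.
rewrite edotZl edot_sumr.
have [->|hy] := eqVneq (bump y p) 0; first by rewrite !mul0r expr2 mul0r.
rewrite expr2; congr (_ * _).
rewrite (bigD1_seq y) ?fset_uniq //= edotZr.
have [_ h1 _ ho] := vSu; have [Sy _] := net_near_mem ys.
rewrite h1 // mulr1 big1_seq ?addr0 // => y' /andP [ny' y's].
rewrite edotZr; have [->|hy'] := eqVneq (bump y' p) 0; first by rewrite mul0r.
have [Sy' _] := net_near_mem y's.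
rewrite ho ?mulr0 //; first by move=> e; rewrite e eqxx in ny'.
have h2 := bump_neq0 hy; have h3 := bump_neq0 hy'.
by have := dtri hd y p y'; rewrite (dC hd p y'); lra.
Qed.

Hypothesis hnet : forall p, exists x, S x /\ d x p <= r.

(* Some net point lies within r of p, where its weight is at least 1. *)
Lemma bump_field_sqr_ge1 p : 1 <= edot (bump_field p) (bump_field p).
Proof.
rewrite bump_field_sqr; have [x [Sx hx]] := hnet p.
have fB := (@net_near_card p (net_near p) (fun _ h => h)).1.
have xs : x \in (fset_set (net_near p) : seq X).
  by rewrite in_fset_set // inE; split => //=; rewrite (dC hd); have := rp; lra.
rewrite (bigD1_seq x) ?fset_uniq //=.
have h1 := bump_ge1 hx.
have : 1 <= bump x p ^+ 2 by rewrite expr2; have := bump_ge0 x p; nra.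
have : 0 <= \sum_(i <- fset_set (net_near p) | i != x) bump i p ^+ 2.
  by apply: sumr_ge0 => i _; exact: sqr_ge0.
lra.
Qed.

Lemma bump_field_le p : enorm (bump_field p) <= 2 * N%:R.
Proof.
apply: le_trans (enorm_sum _ _) _.
have [_ sB] := @net_near_card p (net_near p) (fun _ h => h).
apply: le_trans (sum_le_size (c := 2) _) _.
  move=> y ys; have [Sy _] := net_near_mem ys.
  by rewrite enormZ frame_unit // mulr1 ger0_norm ?bump_ge0 //; exact: bump_le2.
by rewrite mulrC ler_wpM2l // ler_nat.
Qed.

(* For d(p,q) >= r use the bound 2N at p and q; otherwise both sums run over
   the same at most N net points and each tent is 1/r-Lipschitz. *)
Lemma bump_field_lip p q :
  enorm (fun k => bump_field p k - bump_field q k) <= 4 * N%:R * (d p q / r).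
Proof.
have dpos : 0 <= d p q / r by rewrite divr_ge0 ?d_ge0 // ltW.
case: (leP r (d p q)) => hpq.
  apply: le_trans (enormB _ _) _.
  have := bump_field_le p; have := bump_field_le q.
  have : 1 <= d p q / r by rewrite ler_pdivlMr // mul1r.
  have : 0 <= N%:R :> R by []. 
  nra.
pose P := net_near p `&` net_near q.
have hPp : P `<=` net_near p by move=> y [].
have far z z' y : d z z' < r -> ~ (d z y <= 4 * r) -> 2 * r <= d y z'.
  move=> hz /negP; rewrite -ltNge => h.
  by have := dtri hd z z' y; rewrite (dC hd y z'); have := rp; lra.
have ep k : bump_field p k = \sum_(y <- fset_set P) bump y p * u y k.
  apply: bump_field_restrict => // y [Sy hy] nP; apply: bump_eq0.
  by apply: (far q); [rewrite (dC hd) | move=> h; apply: nP].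
have eq k : bump_field q k = \sum_(y <- fset_set P) bump y q * u y k.
  apply: bump_field_restrict => [y []//|y [Sy hy] nP]; apply: bump_eq0.
  by apply: (far p) => // h; apply: nP.
have -> : (fun k => bump_field p k - bump_field q k) =
    (fun k => \sum_(y <- fset_set P) (bump y p - bump y q) * u y k).
  by apply: funext => k; rewrite ep eq -sumrB; apply: eq_bigr => y _; rewrite mulrBl.
apply: le_trans (enorm_sum _ _) _.
have [fP sP] := @net_near_card p P hPp.
apply: le_trans (sum_le_size (c := d p q / r) _) _.
  move=> y ys; have [[Sy _] _] : P y by move: ys; rewrite in_fset_set // inE.
  by rewrite enormZ frame_unit // mulr1; exact: bump_lip.
have : (size (fset_set P))%:R <= N%:R :> R by rewrite ler_nat.
have : 0 <= N%:R :> R by [].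
nra.
Qed.

Hypothesis L0 : 0 <= L.
Hypothesis hL : forall i x y, enorm (fun k => vs i x k - vs i y k) <= L * d x y.

(* Each term contributes at most 2 * L * 2r to <v_i(p), w0(p)>. *)
Lemma bump_field_vs p i : `|edot (vs i p) (bump_field p)| <= 4 * L * r * N%:R.
Proof.
rewrite /bump_field edot_sumr; apply: le_trans (ler_norm_sum _ _ _) _.
have [_ sB] := @net_near_card p (net_near p) (fun _ h => h).
apply: le_trans (sum_le_size (c := 4 * L * r) _) _; last first.
  by rewrite mulrC ler_wpM2l ?ler_nat // !mulr_ge0 // ltW.
move=> y ys; have [Sy _] := net_near_mem ys.
rewrite edotZr normrM ger0_norm ?bump_ge0 //.
have [->|hy] := eqVneq (bump y p) 0; first by rewrite mul0r !mulr_ge0 // ltW.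
have [_ _ hv _] := vSu.
have -> : edot (vs i p) (u y) = edot (fun k => vs i p k - vs i y k) (u y).
  by rewrite edotBl hv // subr0.
have h3 : `|edot (fun k => vs i p k - vs i y k) (u y)| <= L * (2 * r).
  apply: le_trans (cauchy_schwarz _ _) _; rewrite frame_unit // mulr1.
  apply: le_trans (hL i p y) _; rewrite ler_wpM2l // (dC hd).
  exact: ltW (bump_neq0 hy).
have := normr_ge0 (edot (fun k => vs i p k - vs i y k) (u y)).
by have := bump_le2 y p; have := bump_ge0 y p; nra.
Qed.

End BumpField.

Section TransversalField.
Variables (R : realType) (X : choiceType) (d : X -> X -> R) (K : nat).
Hypothesis hd : is_metric d.
Hypothesis hdb : doubling d K.
Hypothesis K_gt0 : (0 < K)%N.
Variables (m D : nat) (vs : 'I_m -> X -> 'I_D -> R) (L : R).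
Hypothesis L0 : 0 <= L.
Hypothesis hL : forall i x y, enorm (fun k => vs i x k - vs i y k) <= L * d x y.
Hypothesis hmD : (m + K ^ 4 < D)%N.

Lemma transversal_field (r : R) : 0 < r ->
  let a := r / (4 * (K ^ 4)%:R) in
  exists w : X -> 'I_D -> R,
  [/\ forall x y, enorm (fun k => w x k - w y k) <= d x y,
      forall x, a <= enorm (w x),
      forall x, enorm (w x) <= r / 2 &
      forall x i, `|edot (vs i x) (w x)| <= a * (4 * L * r * (K ^ 4)%:R)].
Proof.
move=> rp a; have [S [u [vSu hnet]]] := adapted_net_exists hd hdb vs rp hmD.
have N0 : (0 : R) < (K ^ 4)%:R by rewrite ltr0n expn_gt0 K_gt0.
have ap : 0 < a by rewrite /a divr_gt0 // mulr_gt0.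
exists (fun x k => a * bump_field d r S u x k); split.
- move=> x y.
  have -> : (fun k => a * bump_field d r S u x k - a * bump_field d r S u y k) =
      (fun k => a * (bump_field d r S u x k - bump_field d r S u y k)).
    by apply: funext => k; rewrite mulrBr.
  rewrite enormZ gtr0_norm //.
  apply: le_trans (ler_wpM2l (ltW ap) (bump_field_lip hd hdb rp vSu x y)) _.
  have -> : a * (4 * (K ^ 4)%:R * (d x y / r)) = d x y.
    by rewrite /a; field; rewrite gt_eqF // pnatr_eq0 -lt0n.
  exact: lexx.
- move=> x; have h := bump_field_sqr_ge1 hd hdb rp vSu hnet x.
  by rewrite enormZ gtr0_norm // -[leLHS]mulr1 ler_pM2l // enormE -sqrtr1 ler_sqrt; lra.
- move=> x; rewrite enormZ gtr0_norm //.
  apply: le_trans (ler_wpM2l (ltW ap) (bump_field_le hd hdb rp vSu x)) _.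
  have -> : a * (2 * (K ^ 4)%:R) = r / 2.
    by rewrite /a; field; rewrite pnatr_eq0 -lt0n.
  exact: lexx.
- move=> x i; rewrite edotZr normrM gtr0_norm // ler_pM2l //.
  by have := bump_field_vs hd hdb rp vSu L0 hL x i.
Qed.

End TransversalField.

Section NormBounds.
Variables (R : realType) (X : choiceType) (d : X -> X -> R) (D : nat).
Hypothesis hd : is_metric d.
Implicit Types (v : X -> 'I_D -> R).

Lemma lip_normP v (b : R) : (lip_norm d v <= b%:E)%E ->
  forall x y, enorm (fun k => v x k - v y k) <= b * d x y.
Proof.
move=> h x y; case: (pselect (x = y)) => [<-|nxy].
  have -> : (fun k => v x k - v x k) = (fun _ => 0) by apply: funext => k; rewrite subrr.
  by rewrite enorm0 d0 // mulr0.
have dp := d_gt0 hd nxy.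
have : ((enorm (fun k => v x k - v y k) / d x y)%:E <= lip_norm d v)%E.
  by apply: ereal_sup_ubound; left; exists (x, y).
by move/le_trans/(_ h); rewrite lee_fin ler_pdivrMr.
Qed.

Lemma linf_normP v (b : R) : (linf_norm v < b%:E)%E -> forall x, enorm (v x) < b.
Proof.
move=> h x; have : ((enorm (v x))%:E <= linf_norm v)%E.
  by apply: ereal_sup_ubound; left; exists x.
by move/le_lt_trans/(_ h); rewrite lte_fin.
Qed.

Lemma lip_norm_le v (b : R) : 0 <= b ->
  (forall x y, enorm (fun k => v x k - v y k) <= b * d x y) -> (lip_norm d v <= b%:E)%E.
Proof.
move=> b0 h; apply: ge_ereal_sup => z [[[x y] /= nxy <-]|->]; last by rewrite lee_fin.
by rewrite lee_fin ler_pdivrMr // d_gt0.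
Qed.

Lemma linf_norm_le v (b : R) : 0 <= b -> (forall x, enorm (v x) <= b) ->
  (linf_norm v <= b%:E)%E.
Proof. by move=> b0 h; apply: ge_ereal_sup => z [[x _ <-]|->]; rewrite lee_fin. Qed.

Lemma lip_norm_ge0 v : (0 <= lip_norm d v)%E.
Proof. by apply: ereal_sup_ubound; right. Qed.

Lemma linf_norm_ge0 v : (0 <= linf_norm v)%E.
Proof. by apply: ereal_sup_ubound; right. Qed.

End NormBounds.

Lemma ler_abs_scale (R : realType) (c x y : R) : 0 <= x -> x <= y -> c * x <= `|c| * y.
Proof. by move=> x0 xy; have := ler_norm c; have := normr_ge0 c; nra. Qed.

Section NormedSubspace.
Variables (R : realType) (X : Type) (D : nat).
Variables (F : set (X -> 'I_D -> R)) (n : (X -> 'I_D -> R) -> R).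
Hypothesis hF : normed_subspace F n.

Lemma normed_ge0 v : F v -> 0 <= n v.
Proof. by case: hF => _ _ _ h _ Fv; case: (h v Fv). Qed.

Lemma normed0 : n (fun _ _ => 0) = 0.
Proof.
case: hF => F0 _ _ _ [hZ _]; have := hZ 0 _ F0.
have -> : (fun (x : X) (i : 'I_D) => 0 * (0 : R)) = (fun _ _ => 0).
  by apply: funext => x; apply: funext => i; rewrite mul0r.
by rewrite normr0 mul0r.
Qed.

Lemma normed_sum (I : Type) (s : seq I) (g : I -> X -> 'I_D -> R) :
  (forall i, F (g i)) ->
  F (fun x k => \sum_(i <- s) g i x k) /\
  n (fun x k => \sum_(i <- s) g i x k) <= \sum_(i <- s) n (g i).
Proof.
move=> hg; elim: s => [|y s [IH1 IH2]].
  have -> : (fun x k => \sum_(i <- [::]) g i x k) = (fun _ _ => 0).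
    by apply: funext => x; apply: funext => k; rewrite big_nil.
  by rewrite normed0 big_nil; case: hF.
have -> : (fun x k => \sum_(i <- y :: s) g i x k) =
    (fun x k => g y x k + \sum_(i <- s) g i x k).
  by apply: funext => x; apply: funext => k; rewrite big_cons.
case: hF => _ hD _ _ [_ hT]; split; first exact: hD.
by rewrite big_cons; apply: le_trans (hT _ _ (hg y) IH1) _; rewrite lerD2l.
Qed.

Lemma normed_sub v w : F v -> F w ->
  F (fun x k => v x k - w x k) /\ n (fun x k => v x k - w x k) <= n v + n w.
Proof.
case: hF => _ hD hZ _ [hZn hT] Fv Fw.
have -> : (fun x k => v x k - w x k) = (fun x k => v x k + (-1) * w x k).
  by apply: funext => x; apply: funext => k; rewrite mulN1r.
split; first by apply: hD => //; apply: hZ.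
by apply: le_trans (hT _ _ Fv (hZ _ _ Fw)) _; rewrite hZn // normrN normr1 mul1r.
Qed.

End NormedSubspace.

Lemma normed1_ge0 (R : realType) (X : Type) (F1 : set (X -> R)) n1 :
  normed_subspace1 F1 n1 -> forall f, F1 f -> 0 <= n1 f.
Proof. by case=> _ _ _ h _ f Ff; case: (h f Ff). Qed.

Lemma frame_lipschitz (R : realType) (X : choiceType) (d : X -> X -> R) (D : nat)
    (n : (X -> 'I_D -> R) -> R) (Clip : R) (v : X -> 'I_D -> R) :
  is_metric d -> 0 <= n v -> n v <= 1 -> (lip_norm d v <= (Clip * n v)%:E)%E ->
  forall x y, enorm (fun k => v x k - v y k) <= (`|Clip| + 1) * d x y.
Proof.
move=> hd n0 n1 hlip x y; apply: le_trans (lip_normP hd hlip x y) _.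
rewrite ler_wpM2r ?d_ge0 //; have := ler_abs_scale Clip n0 n1; lra.
Qed.

Lemma smooth_approximant (R : realType) (X : choiceType) (d : X -> X -> R) (D : nat)
    (F : set (X -> 'I_D -> R)) (n : (X -> 'I_D -> R) -> R) (Capp : R -> R) :
  is_metric d -> normed_subspace F n ->
  (forall (delta : R) (w : X -> 'I_D -> R), 0 < delta -> (lip_norm d w <= 1)%E ->
     exists v, F v /\
       (linf_norm (fun x i => (v x i - w x i)%R) < delta%:E)%E /\
       ((n v)%:E <= (Capp delta)%:E * (linf_norm w + lip_norm d w))%E) ->
  forall (delta rho : R) (w : X -> 'I_D -> R), 0 < delta -> 0 <= rho ->
  (forall x y, enorm (fun k => w x k - w y k) <= d x y) ->
  (forall x, enorm (w x) <= rho) ->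
  exists v, [/\ F v, forall x, enorm (fun k => v x k - w x k) < delta &
                n v <= Num.max (Capp delta) 0 * (rho + 1)].
Proof.
move=> hd hF happ delta rho w dp rho0 wlip wup.
have hlipw : (lip_norm d w <= 1%:E)%E.
  by apply: lip_norm_le => // x y; rewrite mul1r.
have [v [Fv [hvw hnv]]] := happ delta w dp hlipw.
exists v; split => //; first exact: linf_normP hvw.
have E0 : (0 <= linf_norm w + lip_norm d w)%E by rewrite adde_ge0 ?linf_norm_ge0 ?lip_norm_ge0.
have E1 : (linf_norm w + lip_norm d w <= (rho + 1)%:E)%E.
  by rewrite EFinD; apply: leeD => //; exact: linf_norm_le.
case: (leP (Capp delta) 0) => hc.
  suff : ((n v)%:E <= 0)%E by rewrite lee_fin mul0r.
  by apply: le_trans hnv _; apply: mule_le0_ge0 => //; rewrite lee_fin.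
rewrite -lee_fin EFinM; apply: le_trans hnv _.
by apply: lee_wpmul2l => //; rewrite lee_fin ltW.
Qed.

Section FrameProjection.
Variables (R : realType) (X : Type) (D m : nat).
Variables (F1 : set (X -> R)) (n1 : (X -> R) -> R).
Variables (F : set (X -> 'I_D -> R)) (n : (X -> 'I_D -> R) -> R).
Variables (Cmul Cdot : R).
Hypothesis hF1 : normed_subspace1 F1 n1.
Hypothesis hF : normed_subspace F n.
Hypothesis hmul : forall f v, F1 f -> F v ->
  F (fun x i => f x * v x i) /\ n (fun x i => f x * v x i) <= Cmul * n1 f * n v.
Hypothesis hdot : forall v w, F v -> F w ->
  F1 (fun x => edot (v x) (w x)) /\ n1 (fun x => edot (v x) (w x)) <= Cdot * n v * n w.
Variable vs : 'I_m -> X -> 'I_D -> R.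
Hypothesis hvsF : forall i, F (vs i) /\ n (vs i) <= 1.
Hypothesis hvso : forall p (i j : 'I_m), edot (vs i p) (vs j p) = (i == j)%:R.

Definition frame_coef (v : X -> 'I_D -> R) (i : 'I_m) (x : X) := edot (v x) (vs i x).

Definition frame_perp (v : X -> 'I_D -> R) :=
  fun x k => v x k - \sum_(i < m) frame_coef v i x * vs i x k.

Lemma frame_perp_orth v x j : edot (vs j x) (frame_perp v x) = 0.
Proof.
rewrite /frame_perp edotBr edot_sumr.
under eq_bigr do rewrite edotZr.
rewrite (bigD1 j) //= hvso eqxx mulr1 big1 ?addr0 => [|i nij].
  by rewrite /frame_coef edotC subrr.
by rewrite hvso eq_sym (negPf nij) mulr0.
Qed.

Lemma frame_perp_sqr v x : edot (frame_perp v x) (frame_perp v x) =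
  edot (v x) (v x) - \sum_(i < m) frame_coef v i x ^+ 2.
Proof.
rewrite {1}/frame_perp edotBl edot_suml big1 => [|i _]; last first.
  by rewrite edotZl frame_perp_orth mulr0.
rewrite subr0 /frame_perp edotBr edot_sumr; congr (_ - _).
by apply: eq_bigr => i _; rewrite edotZr expr2.
Qed.

Lemma frame_perp_normed v (B : R) : F v -> n v <= B ->
  F (frame_perp v) /\ n (frame_perp v) <= (1 + m%:R * `|Cmul| * `|Cdot|) * B.
Proof.
move=> Fv nvB; have nv0 := normed_ge0 hF Fv.
pose g i x k := frame_coef v i x * vs i x k.
have hg i : F (g i) /\ n (g i) <= `|Cmul| * (`|Cdot| * n v).
  have [Fvs nvs] := hvsF i; have nvs0 := normed_ge0 hF Fvs.
  have [F1e n1e] := hdot Fv Fvs.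
  have n1e0 := normed1_ge0 hF1 F1e.
  have [Fg ng] := hmul F1e Fvs; split => //.
  have h1 : n1 (frame_coef v i) <= `|Cdot| * n v.
    apply: le_trans n1e _; rewrite -mulrA; apply: ler_abs_scale.
      exact: mulr_ge0.
    by rewrite ler_piMr.
  apply: le_trans ng _; rewrite -mulrA; apply: ler_abs_scale.
    exact: mulr_ge0.
  by apply: le_trans h1; rewrite ler_piMr.
have [Fsum nsum] := normed_sum hF (index_enum 'I_m) (fun i => (hg i).1).
have [Fp np] := normed_sub hF Fv Fsum; split => //.
apply: le_trans (_ : _ <= (1 + m%:R * `|Cmul| * `|Cdot|) * n v) _; last first.
  by rewrite ler_wpM2l // addr_ge0 // !mulr_ge0.
apply: le_trans np _; rewrite mulrDl mul1r lerD2l.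
apply: le_trans nsum _; apply: le_trans (ler_sum _ (fun i _ => (hg i).2)) _.
by rewrite sumr_const card_ord mulr_natl -mulrnAl -!mulrA mulrC.
Qed.

End FrameProjection.

(* Normalisation v / |v| of a field bounded below by c > 0; it stays in F by
   the |.| and 1/. clauses of hypothesis (3). *)
Section Normalisation.
Variables (R : realType) (X : Type) (D : nat).
Variables (F1 : set (X -> R)) (n1 : (X -> R) -> R).
Variables (F : set (X -> 'I_D -> R)) (n : (X -> 'I_D -> R) -> R).
Variables (Cmul : R) (Cinv Cabs : R -> R).
Hypothesis hF1 : normed_subspace1 F1 n1.
Hypothesis hF : normed_subspace F n.
Hypothesis hmul : forall f v, F1 f -> F v ->
  F (fun x i => f x * v x i) /\ n (fun x i => f x * v x i) <= Cmul * n1 f * n v.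
Hypothesis hinv : forall (c : R) f, 0 < c -> F1 f -> (forall x, c <= f x) ->
  F1 (fun x => (f x)^-1) /\ n1 (fun x => (f x)^-1) <= Cinv c * n1 f.
Hypothesis habs : forall (c : R) v, 0 < c -> F v -> (forall x, c <= enorm (v x)) ->
  F1 (fun x => enorm (v x)) /\ n1 (fun x => enorm (v x)) <= Cabs c * n v.

Definition normalised (v : X -> 'I_D -> R) := fun x k => (enorm (v x))^-1 * v x k.

Lemma normalised_unit (v : X -> 'I_D -> R) x : enorm (v x) != 0 ->
  enorm (normalised v x) = 1.
Proof. by move=> h; rewrite enormZ ger0_norm ?invr_ge0 ?enorm_ge0 // mulVf. Qed.

Lemma normalised_normed (c B : R) (v : X -> 'I_D -> R) :
  0 < c -> F v -> n v <= B -> (forall x, c <= enorm (v x)) ->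
  F (normalised v) /\ n (normalised v) <= `|Cmul| * (`|Cinv c| * (`|Cabs c| * B)) * B.
Proof.
move=> cp Fv nvB low; have nv0 := normed_ge0 hF Fv.
have [F1f n1f] := habs cp Fv low.
have [F1i n1i] := hinv cp F1f low.
have [Fu nu] := hmul F1i Fv; split => //.
have n1f' : n1 (fun x => enorm (v x)) <= `|Cabs c| * B.
  exact: le_trans n1f (ler_abs_scale _ nv0 nvB).
have n1i' : n1 (fun x => (enorm (v x))^-1) <= `|Cinv c| * (`|Cabs c| * B).
  exact: le_trans n1i (ler_abs_scale _ (normed1_ge0 hF1 F1f) n1f').
have n1i0 := normed1_ge0 hF1 F1i.
apply: le_trans nu _; rewrite -mulrA -[leRHS]mulrA; apply: ler_abs_scale.
  exact: mulr_ge0.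
exact: ler_pM.
Qed.

End Normalisation.

Lemma residual_numeric (R : realType) (m : nat) (a s : R) (e : 'I_m -> R) :
  0 < a -> (7 / 8 * a) ^+ 2 <= s -> (forall i, `|e i| <= a / (4 * (m%:R + 1))) ->
  (a / 2) ^+ 2 <= s - \sum_(i < m) e i ^+ 2.
Proof.
move=> ap hs he; set M : R := m%:R + 1; set b := a / (4 * M).
have M1 : 1 <= M by rewrite /M lerDr.
have b0 : 0 <= b by rewrite /b divr_ge0 //; lra.
have bM : M * b = a / 4 by rewrite /b; field; rewrite gt_eqF //; lra.
have hsum : \sum_(i < m) e i ^+ 2 <= m%:R * b ^+ 2.
  have he2 i : e i ^+ 2 <= b ^+ 2.
    by rewrite -real_normK ?num_real // lerXn2r ?nnegrE.
  apply: le_trans (ler_sum _ (fun i _ => he2 i)) _.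
  by rewrite sumr_const card_ord mulr_natl.
have ba : b <= a / 4 by rewrite -bM ler_peMl.
have : m%:R * b ^+ 2 <= a ^+ 2 / 16.
  apply: le_trans (_ : _ <= M * b ^+ 2) _; first by rewrite ler_wpM2r ?sqr_ge0 ?lerDl.
  by rewrite expr2 mulrA bM; nra.
by move: hs hsum; rewrite !expr2; nra.
Qed.

Lemma residual_lower_bound (R : realType) (D m : nat) (a : R)
    (f : 'I_m -> 'I_D -> R) (u v : 'I_D -> R) :
  0 < a -> (forall i, enorm (f i) = 1) -> a <= enorm u ->
  (forall i, `|edot (f i) u| <= a / (8 * (m%:R + 1))) ->
  enorm (fun k => v k - u k) < a / (8 * (m%:R + 1)) ->
  (a / 2) ^+ 2 <= edot v v - \sum_(i < m) edot v (f i) ^+ 2.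
Proof.
move=> ap f1 ua fu vu; set M : R := m%:R + 1 in fu vu *; set dl := a / (8 * M) in fu vu *.
have M1 : 1 <= M by rewrite /M lerDr.
have dl8 : dl <= a / 8 by rewrite ler_pM2l // lef_pV2 ?posrE; lra.
have dl0 : 0 <= dl by rewrite /dl divr_ge0 //; lra.
apply: residual_numeric => //.
  rewrite -enorm_sqr lerXn2r ?nnegrE ?enorm_ge0 //; first by rewrite mulr_ge0 ?ltW.
  have := enorm_lerB u (fun k => u k - v k).
  have -> : (fun k => u k - (u k - v k)) = v by apply: funext => k; rewrite opprB addrC subrK.
  rewrite (enormBC u v); lra.
move=> i; rewrite edotC.
have -> : edot (f i) v = edot (f i) u + edot (f i) (fun k => v k - u k).
  by rewrite edotBr addrC subrK.
apply: le_trans (ler_normD _ _) _.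
apply: le_trans (lerD (fu i) (cauchy_schwarz _ _)) _.
rewrite f1 mul1r.
have -> : a / (4 * M) = dl + dl by rewrite /dl; field; rewrite gt_eqF //; lra.
by rewrite lerD2l ltW.
Qed.

Lemma frame_perp_lower_bound (R : realType) (X : Type) (D m : nat)
    (vs : 'I_m -> X -> 'I_D -> R) (a : R) (v w : X -> 'I_D -> R) :
  (forall p (i j : 'I_m), edot (vs i p) (vs j p) = (i == j)%:R) ->
  (forall i x, enorm (vs i x) = 1) -> 0 < a ->
  (forall x, a <= enorm (w x)) ->
  (forall x i, `|edot (vs i x) (w x)| <= a / (8 * (m%:R + 1))) ->
  (forall x, enorm (fun k => v x k - w x k) < a / (8 * (m%:R + 1))) ->
  forall x, a / 2 <= enorm (frame_perp vs v x).
Proof.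
move=> hvso hvs1 ap wlow wvs vw x.
have := residual_lower_bound ap (fun i => hvs1 i x) (wlow x) (wvs x) (vw x).
rewrite -frame_perp_sqr // -enorm_sqr => h.
by have := enorm_ge0 (frame_perp vs v x); nra.
Qed.

(* The dimension hypothesis m <= D - 224 K^4 log K leaves room for
   m + K^4 < D vectors, since log K >= log 2 >= 1/2. *)
Lemma dimension_room (R : realType) (K m D : nat) : (2 <= K)%N ->
  (m%:R : R) <= D%:R - 224 * K%:R ^+ 4 * ln (K%:R : R) -> (m + K ^ 4 < D)%N.
Proof.
move=> hK hm.
have ln2 : 1 / 2 <= ln (2 : R).
  have := expR_ge1Dx (- ln (2 : R)); rewrite expRN lnK ?posrE // -div1r; lra.
have K0 : (0 < K)%N by apply: leq_trans hK.
have lnK : ln (2 : R) <= ln (K%:R : R) by rewrite ler_ln ?posrE ?ltr0n ?ler_nat.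
have K1 : 1 <= (K%:R : R) ^+ 4 by rewrite exprn_ege1 // ler1n; exact: ltnW.
by rewrite -(ltr_nat R) natrD natrX; nra.
Qed.

Section Constants.
Variables (R : realType) (K m : nat) (Clip Cmul Cdot : R) (Cinv Cabs Capp : R -> R).
Hypothesis K_gt0 : (0 < K)%N.

Definition packing : R := (K ^ 4)%:R.
Definition frame_lip : R := `|Clip| + 1.
Definition net_radius : R := (32 * frame_lip * packing * (m%:R + 1))^-1.
Definition field_floor : R := net_radius / (4 * packing).
Definition tolerance : R := field_floor / (8 * (m%:R + 1)).
Definition perp_bound : R :=
  (1 + m%:R * `|Cmul| * `|Cdot|) * (Num.max (Capp tolerance) 0 * (net_radius / 2 + 1)).
Definition final_bound : R :=
  `|Cmul| * (`|Cinv (field_floor / 2)| * (`|Cabs (field_floor / 2)| * perp_bound)) *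
  perp_bound.

Lemma packing_gt0 : 0 < packing.
Proof. by rewrite ltr0n expn_gt0 K_gt0. Qed.

Lemma frame_lip_ge1 : 1 <= frame_lip.
Proof. by rewrite /frame_lip lerDr. Qed.

Lemma net_radius_gt0 : 0 < net_radius.
Proof.
have N0 := packing_gt0; have L1 := frame_lip_ge1; have m0 := ler0n R m.
by rewrite invr_gt0 !mulr_gt0 //; lra.
Qed.

Lemma field_floor_gt0 : 0 < field_floor.
Proof. by rewrite divr_gt0 ?net_radius_gt0 // mulr_gt0 ?packing_gt0. Qed.

Lemma tolerance_gt0 : 0 < tolerance.
Proof. by rewrite divr_gt0 ?field_floor_gt0 // mulr_gt0 // ltr_wpDl. Qed.

(* The radius is chosen so that the transversality defect of the bump field
   is exactly the tolerance. *)
Lemma transversality_defect :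
  field_floor * (4 * frame_lip * net_radius * packing) = tolerance.
Proof.
have := frame_lip_ge1; have := ler0n R m; have : 0 < (K%:R : R) by rewrite ltr0n.
move=> K0 m0 L1; rewrite /tolerance /field_floor /net_radius; field.
by rewrite !gt_eqF //; lra.
Qed.

End Constants.

Theorem theorem4p5 (R : realType) (K m : nat)
    (* the fixed implied constants of hypotheses (2)-(4) *)
    (Clip1 Clip Cmul Cdot : R) (Cinv Cabs Capp : R -> R) :
  exists C : R,
  forall (X : Type) (d : X -> X -> R) (D : nat)
         (F1 : set (X -> R)) (n1 : (X -> R) -> R)
         (F : set (X -> 'I_D -> R)) (n : (X -> 'I_D -> R) -> R),
    is_metric d -> (2 <= K)%N -> doubling d K ->
    (* F1 subset Lip(X,R), F subset Lip(X,R^D) *)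
    (forall f, F1 f -> (lip_norm1 d f < +oo)%E) ->
    (forall v, F v -> (lip_norm d v < +oo)%E) ->
    (* (1) *)
    normed_subspace1 F1 n1 -> normed_subspace F n ->
    (* (2) *)
    (forall f, F1 f -> (lip_norm1 d f <= (Clip1 * n1 f)%:E)%E) ->
    (forall v, F v -> (lip_norm d v <= (Clip * n v)%:E)%E) ->
    (* (3) *)
    (forall f v, F1 f -> F v ->
       F (fun x i => f x * v x i) /\ n (fun x i => f x * v x i) <= Cmul * n1 f * n v) ->
    (forall v w, F v -> F w ->
       F1 (fun x => edot (v x) (w x)) /\
       n1 (fun x => edot (v x) (w x)) <= Cdot * n v * n w) ->
    (forall (c : R) f, 0 < c -> F1 f -> (forall x, c <= f x) ->
       F1 (fun x => (f x)^-1) /\ n1 (fun x => (f x)^-1) <= Cinv c * n1 f) ->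
    (forall (c : R) v, 0 < c -> F v -> (forall x, c <= enorm (v x)) ->
       F1 (fun x => enorm (v x)) /\ n1 (fun x => enorm (v x)) <= Cabs c * n v) ->
    (* (4) *)
    (forall (delta : R) (w : X -> 'I_D -> R), 0 < delta -> (lip_norm d w <= 1)%E ->
       exists v, F v /\
         (linf_norm (fun x i => (v x i - w x i)%R) < delta%:E)%E /\
         ((n v)%:E <= (Capp delta)%:E * (linf_norm w + lip_norm d w))%E) ->
    (1 <= m)%N ->
    ((m%:R : R) <= D%:R - 224 * K%:R ^+ 4 * ln (K%:R : R)) ->
    forall vs : 'I_m -> X -> 'I_D -> R,
      (forall i, F (vs i) /\ n (vs i) <= 1) ->
      (forall i x, enorm (vs i x) = 1) ->
      (forall p (i j : 'I_m), edot (vs i p) (vs j p) = (i == j)%:R) ->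
      exists v : X -> 'I_D -> R,
        [/\ F v, n v <= C,
            forall p, enorm (v p) = 1 &
            forall p (i : 'I_m), edot (vs i p) (v p) = 0].
Proof.
exists (final_bound K m Clip Cmul Cdot Cinv Cabs Capp).
move=> X0 d D F1 n1 F n hd0 hK hdb0 _ _ hF1 hF _ hlip hmul hdot hinv habs happ _ hm
  vs hvsF hvs1 hvso.
pose X : choiceType := {classic X0}.
have hd : @is_metric R X d := hd0.
have hdb : @doubling R X d K := hdb0.
have K_gt0 : (0 < K)%N by apply: ltnW.
set a := field_floor K m Clip.
have ap : 0 < a := field_floor_gt0 m Clip K_gt0.
have a2 : 0 < a / 2 by rewrite divr_gt0.
have hL i x y :=
  frame_lipschitz hd (normed_ge0 hF (hvsF i).1) (hvsF i).2 (hlip _ (hvsF i).1) x y.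
have [w [wlip wlow wup wvs]] := transversal_field hd hdb K_gt0
  (le_trans ler01 (frame_lip_ge1 Clip)) hL (dimension_room hK hm)
  (net_radius_gt0 m Clip K_gt0).
rewrite -/(packing _) -/(frame_lip _) (transversality_defect m Clip K_gt0) in wvs.
have [v [Fv vw nv]] := smooth_approximant hd hF happ (tolerance_gt0 m Clip K_gt0)
  (divr_ge0 (ltW (net_radius_gt0 m Clip K_gt0)) (ler0n R 2)) wlip wup.
have [Fp np] := frame_perp_normed hF1 hF hmul hdot hvsF Fv nv.
have low := frame_perp_lower_bound hvso hvs1 ap wlow wvs vw.
have [Fu nu] := normalised_normed hF1 hF hmul hinv habs a2 Fp np low.
exists (normalised (frame_perp vs v)); split; [exact: Fu | exact: nu | |].
- by move=> p; apply: normalised_unit; rewrite gt_eqF // (lt_le_trans a2 (low p)).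
- by move=> p i; rewrite edotZr frame_perp_orth ?mulr0.
Qed.
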